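(* Let $\mathcal C$ be a $G$-category and $(F,\psi)\colon\mathcal C\to\mathcal C'$ a $G$-invariant functor. The following are equivalent: (1) $(F,\psi)$ is a $G$-covering; (2) $(F,\psi)$ is a $G$-precovering which is universal among $G$-precoverings from $\mathcal C$ (for every $G$-precovering $(E,\chi)\colon\mathcal C\to\mathcal C''$ there is a functor $K\colon\mathcal C'\to\mathcal C''$, unique up to natural isomorphism, with $(E,\chi)\cong(KF,K\psi)$ as $G$-invariant functors); (3) $(F,\psi)$ is universal among $G$-invariant functors from $\mathcal C$ (same property for all $G$-invariant $(E,\chi)$); (4) there exists an equivalence $H\colon\mathcal C/G\to\mathcal C'$ with $(F,\psi)\cong(HP,H\phi)$ as $G$-invariant functors; (5) there exists an equivalence $H\colon\mathcal C/G\to\mathcal C'$ with $F=HP$ and $\psi=H\phi$.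
   Context: $\Bbbk$ is a commutative ring; all categories and functors are $\Bbbk$-linear; $G$ is a group. A $G$-category is a category $\mathcal C$ with a group homomorphism $A\colon G\to\operatorname{Aut}(\mathcal C)$; write $\alpha x=A_\alpha x$, $\alpha f=A_\alpha f$. An invariance adjuster of $F\colon\mathcal C\to\mathcal C'$ is a family of natural isomorphisms $\psi_\alpha\colon F\to FA_\alpha$ with $\psi_1=\mathrm{id}$ and $(\psi_\beta A_\alpha)\psi_\alpha=\psi_{\beta\alpha}$; $(F,\psi)$ is a $G$-invariant functor; for a functor $K$, $(KF,K\psi)$ is again $G$-invariant. Morphisms of $G$-invariant functors are natural transformations $\eta\colon F\to F'$ with $(\eta A_\alpha)\psi_\alpha=\psi'_\alpha\eta$. $F^{(1)}_{x,y}\colon\bigoplus_{\alpha\in G}\mathcal C(\alpha x,y)\to\mathcal C'(Fx,Fy)$, $(f_\alpha)\mapsto\sum_\alpha F(f_\alpha)\psi_{\alpha,x}$. $(F,\psi)$ is a $G$-precovering if all $F^{(1)}_{x,y}$ are bijective, a $G$-covering if moreover $F$ is dense. Orbit category $\mathcal C/G$: objects of $\mathcal C$; morphisms $x\to y$ are row- and column-finite families $(f_{\beta,\alpha})_{(\alpha,\beta)\in G\times G}$, $f_{\beta,\alpha}\in\mathcal C(\alpha x,\beta y)$, with $f_{\gamma\beta,\gamma\alpha}=\gamma(f_{\beta,\alpha})$; composition $(gf)_{\beta,\alpha}=\sum_\gamma g_{\beta,\gamma}f_{\gamma,\alpha}$. Canonical functor $Px=x$, $P(f)=(\delta_{\alpha,\beta}\alpha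 f)_{(\alpha,\beta)}$, with $\phi_{\mu,x}=(\delta_{\alpha,\beta\mu}\mathrm{id}_{\alpha x})_{(\alpha,\beta)}\colon Px\to P\mu x$. *)

From HB Require Import structures.
From mathcomp Require Import all_boot all_order all_algebra.
From mathcomp Require Import boolp classical_sets fsbigop.

Set Implicit Arguments.
Unset Strict Implicit.
Unset Printing Implicit Defensive.
Import GRing.Theory.
Local Open Scope ring_scope.
Local Open Scope classical_set_scope.

Record group := Group {
  gcar :> choiceType;
  gmul : gcar -> gcar -> gcar;
  gone : gcar;
  ginvg : gcar -> gcar;
  gmulA : forall a b c, gmul a (gmul b c) = gmul (gmul a b) c;
  gmul1g : forall a, gmul gone a = a;
  gmulVg : forall a, gmul (ginvg a) a = gone }.

Record precat (k : comPzRingType) := PreCat {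
  obj : Type;
  hom : obj -> obj -> lmodType k;
  comp : forall x y z, hom y z -> hom x y -> hom x z;
  idm : forall x, hom x x }.
Arguments comp {k p x y z}.
Arguments idm {k p} x.
Arguments hom {k} p.

Definition is_cat (k : comPzRingType) (C : precat k) : Prop :=
  [/\ (forall x y z w (h : hom C z w) (g : hom C y z) (f : hom C x y),
          comp h (comp g f) = comp (comp h g) f),
      (forall x y (f : hom C x y), comp (idm y) f = f),
      (forall x y (f : hom C x y), comp f (idm x) = f),
      (forall x y z (a : k) (g1 g2 : hom C y z) (f : hom C x y),
          comp (a *: g1 + g2) f = a *: comp g1 f + comp g2 f) &
      (forall x y z (a : k) (g : hom C y z) (f1 f2 : hom C x y),
          comp g (a *: f1 + f2) = a *: comp g f1 + comp g f2)].

Definition castH (k : comPzRingType) (C : precat k) (x x' y y' : obj C)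
  (e1 : x = x') (e2 : y = y') (f : hom C x y) : hom C x' y' :=
  match e1 in _ = x0, e2 in _ = y0 return hom C x0 y0 with
  | erefl, erefl => f end.

Definition is_iso (k : comPzRingType) (C : precat k) (x y : obj C)
  (f : hom C x y) : Prop :=
  exists g : hom C y x, comp g f = idm x /\ comp f g = idm y.

Record functor (k : comPzRingType) (C D : precat k) := Functor {
  fobj : obj C -> obj D;
  fmap : forall x y, hom C x y -> hom D (fobj x) (fobj y) }.
Arguments fmap {k C D} f {x y}.

Definition is_functor (k : comPzRingType) (C D : precat k) (F : functor C D) :=
  [/\ (forall x y z (g : hom C y z) (f : hom C x y),
          fmap F (comp g f) = comp (fmap F g) (fmap F f)),
      (forall x, fmap F (idm x) = idm (fobj F x)) &
      (forall x y (a : k) (f g : hom C x y),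
          fmap F (a *: f + g) = a *: fmap F f + fmap F g)].

Definition fid (k : comPzRingType) (C : precat k) : functor C C :=
  @Functor k C C (fun x : obj C => x) (fun x y (f : hom C x y) => f).

(* fcomp F K is the composite  K o F  (written KF in the paper) *)
Definition fcomp (k : comPzRingType) (C D E : precat k)
  (F : functor C D) (K : functor D E) : functor C E :=
  @Functor k C E (fun x => fobj K (fobj F x)) (fun x y f => fmap K (fmap F f)).

Definition ntrans (k : comPzRingType) (C D : precat k) (F F' : functor C D) :=
  forall x : obj C, hom D (fobj F x) (fobj F' x).

Definition is_natural (k : comPzRingType) (C D : precat k) (F F' : functor C D)
  (eta : ntrans F F') : Prop :=
  forall x y (f : hom C x y), comp (eta y) (fmap F f) = comp (fmap F' f) (eta x).

Definition is_natiso (k : comPzRingType) (C D : precat k) (F F' : functor C D)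
  (eta : ntrans F F') : Prop :=
  is_natural eta /\ forall x, is_iso (eta x).

Definition nat_isomorphic (k : comPzRingType) (C D : precat k) (F F' : functor C D)
  : Prop := exists eta : ntrans F F', is_natiso eta.

Definition is_equivalence (k : comPzRingType) (C D : precat k) (H : functor C D)
  : Prop :=
  is_functor H /\
  exists H' : functor D C, is_functor H' /\
    nat_isomorphic (fcomp H H') (fid C) /\ nat_isomorphic (fcomp H' H) (fid D).

Record gaction (k : comPzRingType) (G : group) (C : precat k) := GAction {
  act : G -> obj C -> obj C;
  actm : forall (a : G) x y, {linear hom C x y -> hom C (act a x) (act a y)};
  act1 : forall x, act (gone G) x = x;
  actM : forall (a b : G) x, act (gmul b a) x = act b (act a x) }.
Arguments actm {k G C} g a {x y}.

(* A : G -> Aut(C) is a group homomorphism *)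
Definition is_gcat (k : comPzRingType) (G : group) (C : precat k)
  (A : gaction G C) : Prop :=
  [/\ (forall a x y z (g : hom C y z) (f : hom C x y),
          actm A a (comp g f) = comp (actm A a g) (actm A a f)),
      (forall a x, actm A a (idm x) = idm (act A a x)),
      (forall x y (f : hom C x y),
          actm A (gone G) f = castH (esym (act1 A x)) (esym (act1 A y)) f) &
      (forall a b x y (f : hom C x y),
          actm A (gmul b a) f =
          castH (esym (actM A a b x)) (esym (actM A a b y))
                (actm A b (actm A a f)))].

Record ginvf (k : comPzRingType) (G : group) (C : precat k) (A : gaction G C)
  (D : precat k) := GInv {
  gfun : functor C D;
  gadj : forall (a : G) (x : obj C), hom D (fobj gfun x) (fobj gfun (act A a x)) }.
Arguments gfun {k G C A D}.
Arguments gadj {k G C A D}.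

Definition is_adjuster (k : comPzRingType) (G : group) (C : precat k)
  (A : gaction G C) (D : precat k) (F : functor C D)
  (psi : forall (a : G) (x : obj C), hom D (fobj F x) (fobj F (act A a x))) :=
  [/\ (forall a x y (f : hom C x y),
          comp (psi a y) (fmap F f) = comp (fmap F (actm A a f)) (psi a x)),
      (forall a x, is_iso (psi a x)),
      (forall x, psi (gone G) x =
                 castH erefl (f_equal (fobj F) (esym (act1 A x))) (idm (fobj F x))) &
      (forall a b x, comp (psi b (act A a x)) (psi a x) =
                     castH erefl (f_equal (fobj F) (actM A a b x)) (psi (gmul b a) x))].

Definition is_ginv (k : comPzRingType) (G : group) (C : precat k)
  (A : gaction G C) (D : precat k) (F : ginvf A D) : Prop :=
  is_functor (gfun F) /\ is_adjuster (gadj F).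

Definition whisker (k : comPzRingType) (G : group) (C : precat k)
  (A : gaction G C) (D E : precat k) (K : functor D E) (F : ginvf A D)
  : ginvf A E :=
  @GInv k G C A E (fcomp (gfun F) K) (fun a x => fmap K (gadj F a x)).

Definition ginvf_iso (k : comPzRingType) (G : group) (C : precat k)
  (A : gaction G C) (D : precat k) (F F' : ginvf A D) : Prop :=
  exists eta : ntrans (gfun F) (gfun F'),
    [/\ is_natural eta,
        (forall x, is_iso (eta x)) &
        (forall a x, comp (eta (act A a x)) (gadj F a x) =
                     comp (gadj F' a x) (eta x))].

Definition F1 (k : comPzRingType) (G : group) (C : precat k)
  (A : gaction G C) (D : precat k) (F : ginvf A D) (x y : obj C)
  (f : forall a : G, hom C (act A a x) y) : hom D (fobj (gfun F) x) (fobj (gfun F) y) :=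
  \sum_(a \in [set: G]) comp (fmap (gfun F) (f a)) (gadj F a x).

Definition fin_supp (k : comPzRingType) (G : group) (T : G -> lmodType k)
  (f : forall a : G, T a) : Prop :=
  exists s : seq G, forall a, f a != 0 -> a \in s.

Definition is_precovering (k : comPzRingType) (G : group) (C : precat k)
  (A : gaction G C) (D : precat k) (F : ginvf A D) : Prop :=
  forall x y : obj C,
    (* injectivity on the direct sum *)
    (forall f g : forall a : G, hom C (act A a x) y,
        fin_supp f -> fin_supp g -> F1 F f = F1 F g -> f = g) /\
    (forall h : hom D (fobj (gfun F) x) (fobj (gfun F) y),
        exists2 f : forall a : G, hom C (act A a x) y, fin_supp f & F1 F f = h).

Definition is_dense (k : comPzRingType) (C D : precat k) (F : functor C D) : Prop :=
  forall y : obj D, exists x : obj C, exists f : hom D (fobj F x) y, is_iso f.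

Definition is_covering (k : comPzRingType) (G : group) (C : precat k)
  (A : gaction G C) (D : precat k) (F : ginvf A D) : Prop :=
  is_precovering F /\ is_dense (gfun F).

Definition is_universal_among (k : comPzRingType) (G : group) (C : precat k)
  (A : gaction G C) (D : precat k) (F : ginvf A D)
  (Q : forall E : precat k, ginvf A E -> Prop) : Prop :=
  forall (E : precat k) (Ec : ginvf A E),
    is_cat E -> is_ginv Ec -> Q E Ec ->
    (exists K : functor D E, is_functor K /\ ginvf_iso Ec (whisker K F)) /\
    (forall K K' : functor D E, is_functor K -> is_functor K' ->
       ginvf_iso Ec (whisker K F) -> ginvf_iso Ec (whisker K' F) ->
       nat_isomorphic K K').

Section Orbit.
Variables (k : comPzRingType) (G : group) (C : precat k) (A : gaction G C).

Definition ofam (x y : obj C) := forall p : G * G, hom C (act A p.2 x) (act A p.1 y).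
(* f (b, a) is the entry f_{b,a} : a x -> b y *)

Lemma castH_lin (x x' y y' : obj C) (e1 : x = x') (e2 : y = y') (a : k)
  (f g : hom C x y) : castH e1 e2 (a *: f + g) = a *: castH e1 e2 f + castH e1 e2 g.
Proof. by destruct e1; destruct e2. Qed.

Lemma castH0 (x x' y y' : obj C) (e1 : x = x') (e2 : y = y') :
  castH e1 e2 0 = 0.
Proof. by destruct e1; destruct e2. Qed.

Definition orbit_prop (x y : obj C) (f : ofam x y) : Prop :=
  [/\ (forall a : G, exists s : seq G, forall b, f (b, a) != 0 -> b \in s),
      (forall b : G, exists s : seq G, forall a, f (b, a) != 0 -> a \in s) &
      (forall c b a : G, f (gmul c b, gmul c a) =
         castH (esym (actM A a c x)) (esym (actM A b c y)) (actm A c (f (b, a))))].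

Definition orbhom (x y : obj C) := {f : ofam x y | orbit_prop f}.

Section Ops.
Variables x y : obj C.

Definition ofam_zero : ofam x y := fun p => 0.
Definition ofam_add (f g : ofam x y) : ofam x y := fun p => f p + g p.
Definition ofam_opp (f : ofam x y) : ofam x y := fun p => - f p.
Definition ofam_scale (r : k) (f : ofam x y) : ofam x y := fun p => r *: f p.

Lemma orbit_lin (r : k) (f g : ofam x y) : orbit_prop f -> orbit_prop g ->
  orbit_prop (ofam_add (ofam_scale r f) g).
Proof.
move=> [cf rf ef] [cg rg eg]; split.
- move=> a; case: (cf a) => s1 h1; case: (cg a) => s2 h2; exists (s1 ++ s2) => b.
  rewrite /ofam_add /ofam_scale mem_cat.
  case: (eqVneq (f (b, a)) 0) => [->|/h1 ->//]; rewrite scaler0 add0r => /h2 ->.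
  by rewrite orbT.
- move=> b; case: (rf b) => s1 h1; case: (rg b) => s2 h2; exists (s1 ++ s2) => a.
  rewrite /ofam_add /ofam_scale mem_cat.
  case: (eqVneq (f (b, a)) 0) => [->|/h1 ->//]; rewrite scaler0 add0r => /h2 ->.
  by rewrite orbT.
- move=> c b a; rewrite /ofam_add /ofam_scale ef eg linearD linearZ /=.
  by rewrite castH_lin.
Qed.

Lemma orbit_zero : orbit_prop ofam_zero.
Proof.
split.
- by move=> a; exists [::] => b; rewrite eqxx.
- by move=> b; exists [::] => a; rewrite eqxx.
- by move=> c b a; rewrite /ofam_zero linear0 castH0.
Qed.

Lemma orbit_add (f g : ofam x y) : orbit_prop f -> orbit_prop g ->
  orbit_prop (ofam_add f g).
Proof.
move=> hf hg; have := orbit_lin 1 hf hg.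
by congr orbit_prop; apply: functional_extensionality_dep => p; rewrite /ofam_add /ofam_scale scale1r.
Qed.

Lemma orbit_scale (r : k) (f : ofam x y) : orbit_prop f -> orbit_prop (ofam_scale r f).
Proof.
move=> hf; have := orbit_lin r hf orbit_zero.
by congr orbit_prop; apply: functional_extensionality_dep => p; rewrite /ofam_add /ofam_zero addr0.
Qed.

Lemma orbit_opp (f : ofam x y) : orbit_prop f -> orbit_prop (ofam_opp f).
Proof.
move=> hf; have := orbit_scale (-1) hf.
by congr orbit_prop; apply: functional_extensionality_dep => p; rewrite /ofam_scale scaleN1r.
Qed.

Definition ozero : orbhom x y := exist _ _ orbit_zero.
Definition oadd (f g : orbhom x y) : orbhom x y :=
  exist _ _ (orbit_add (proj2_sig f) (proj2_sig g)).
Definition oopp (f : orbhom x y) : orbhom x y :=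
  exist _ _ (orbit_opp (proj2_sig f)).
Definition oscale (r : k) (f : orbhom x y) : orbhom x y :=
  exist _ _ (orbit_scale r (proj2_sig f)).

Lemma orb_eq (f g : orbhom x y) : (forall p, proj1_sig f p = proj1_sig g p) -> f = g.
Proof.
case: f g => [f hf] [g hg] /= e.
have efg : f = g by apply: functional_extensionality_dep.
by subst g; congr exist; apply: Prop_irrelevance.
Qed.

HB.instance Definition _ := gen_eqMixin (orbhom x y).
HB.instance Definition _ := gen_choiceMixin (orbhom x y).

Lemma oaddA : associative oadd.
Proof. by move=> f g h; apply: orb_eq => p /=; rewrite /ofam_add addrA. Qed.
Lemma oaddC : commutative oadd.
Proof. by move=> f g; apply: orb_eq => p /=; rewrite /ofam_add addrC. Qed.
Lemma oadd0 : left_id ozero oadd.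
Proof. by move=> f; apply: orb_eq => p /=; rewrite /ofam_add /ofam_zero add0r. Qed.
Lemma oaddN : left_inverse ozero oopp oadd.
Proof. by move=> f; apply: orb_eq => p /=; rewrite /ofam_add /ofam_opp addNr. Qed.

HB.instance Definition _ := GRing.isZmodule.Build (orbhom x y) oaddA oaddC oadd0 oaddN.

Lemma oscaleA r s (f : orbhom x y) : oscale r (oscale s f) = oscale (r * s) f.
Proof. by apply: orb_eq => p /=; rewrite /ofam_scale scalerA. Qed.
Lemma oscale1 : left_id 1 oscale.
Proof. by move=> f; apply: orb_eq => p /=; rewrite /ofam_scale scale1r. Qed.
Lemma oscaleDr : right_distributive oscale +%R.
Proof. by move=> r f g; apply: orb_eq => p /=; rewrite /ofam_scale /ofam_add scalerDr. Qed.
Lemma oscaleDl (f : orbhom x y) : {morph oscale^~ f : r s / r + s}.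
Proof. by move=> r s; apply: orb_eq => p /=; rewrite /ofam_scale /ofam_add scalerDl. Qed.

HB.instance Definition _ :=
  GRing.Zmodule_isLmodule.Build k (orbhom x y) oscaleA oscale1 oscaleDr oscaleDl.

End Ops.

(* total "smart constructor": the family itself when it satisfies the
   defining conditions of morphisms of C/G (which always holds in the
   situations below when C is a G-category), and 0 otherwise. *)
Definition omk (x y : obj C) (f : ofam x y) : orbhom x y :=
  match pselect (orbit_prop f) with
  | left h => exist _ f h
  | right _ => 0
  end.

Definition ocomp (x y z : obj C) (g : orbhom y z) (f : orbhom x y) : orbhom x z :=
  omk (fun p : G * G =>
    \sum_(b \in [set: G])
      (comp (proj1_sig g (p.1, b)) (proj1_sig f (b, p.2))
        : hom C (act A p.2 x) (act A p.1 z))).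

Definition oid (x : obj C) : orbhom x x :=
  omk (fun p : G * G =>
    match pselect (p.2 = p.1) with
    | left e => castH erefl (f_equal (fun c => act A c x) e) (idm (act A p.2 x))
    | right _ => 0
    end).

Definition orbit_cat : precat k := @PreCat k (obj C) orbhom ocomp oid.

Definition orbitP : functor C orbit_cat :=
  @Functor k C orbit_cat (fun x => x) (fun x y (f : hom C x y) =>
    omk (fun p : G * G =>
      match pselect (p.2 = p.1) with
      | left e => castH erefl (f_equal (fun c => act A c y) e) (actm A p.2 f)
      | right _ => 0
      end)).

Definition orbit_phi (mu : G) (x : obj C) : hom orbit_cat x (act A mu x) :=
  omk (fun p : G * G =>
    match pselect (p.2 = gmul p.1 mu) with
    | left e => castH erefl
                  (etrans (f_equal (fun c => act A c x) e) (actM A mu p.1 x))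
                  (idm (act A p.2 x))
    | right _ => 0
    end).

Definition orbitPphi : ginvf A orbit_cat := @GInv k G C A orbit_cat orbitP orbit_phi.

End Orbit.

(* For a G-invariant functor (E, chi) out of C, the formula
     L f = sum_a E (f_{1,a}) o chi_{a,x}
   defines a functor L : C/G -> E with (L P, L phi) = (E, chi) on the nose;
   since every morphism f of C/G equals sum_a P (f_{1,a}) o phi_{a,x}, a
   functor out of C/G is determined up to isomorphism by its composite with
   (P, phi).  Hence (P, phi) is a universal G-covering.  For (F, psi) itself,
   the lift L_F acts on morphisms as F^(1) composed with the bijection
   C/G(x, y) = (+)_a C(a x, y), so L_F is fully faithful iff (F, psi) is a
   G-precovering and dense iff F is; all five conditions reduce to L_F being
   an equivalence. *)

From HB Require Import structures.
From mathcomp Require Import all_boot all_order all_algebra.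
From mathcomp Require Import boolp classical_sets fsbigop finmap.

Set Implicit Arguments.
Unset Strict Implicit.
Unset Printing Implicit Defensive.
Import GRing.Theory.
Local Open Scope ring_scope.

Local Notation "a \* b" := (gmul a b) (at level 40, left associativity).
Local Notation "1g" := (gone _).

Section GroupTheory.
Variable G : group.

Lemma gmulV (a : G) : a \* ginvg a = 1g.
Proof.
rewrite -[LHS]gmul1g -(gmulVg (ginvg a)) -gmulA (gmulA (ginvg a) a).
by rewrite gmulVg gmul1g gmulVg.
Qed.

Lemma gmulg1 (a : G) : a \* 1g = a.
Proof. by rewrite -(gmulVg a) gmulA gmulV gmul1g. Qed.

Lemma gmulKg (a b : G) : ginvg a \* (a \* b) = b.
Proof. by rewrite gmulA gmulVg gmul1g. Qed.

Lemma gmulKVg (a b : G) : a \* (ginvg a \* b) = b.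
Proof. by rewrite gmulA gmulV gmul1g. Qed.

Lemma gmulgK (a b : G) : b \* a \* ginvg a = b.
Proof. by rewrite -gmulA gmulV gmulg1. Qed.

Lemma gmulgKV (a b : G) : b \* ginvg a \* a = b.
Proof. by rewrite -gmulA gmulVg gmulg1. Qed.

Lemma gmulgI (c a b : G) : c \* a = c \* b -> a = b.
Proof. by move=> e; rewrite -(gmulKg c a) e gmulKg. Qed.

Lemma gmul_bij (c : G) : bijective (gmul c).
Proof. by exists (gmul (ginvg c)) => a; rewrite ?gmulKg ?gmulKVg. Qed.

Lemma gmulr_bij (c : G) : bijective (fun d => d \* c).
Proof. by exists (fun d => d \* ginvg c) => a; rewrite ?gmulgK ?gmulgKV. Qed.

End GroupTheory.

Section LinearMaps.
Variables (k : comPzRingType) (V W : lmodType k) (h : V -> W).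
Hypothesis h_lin : linear h.

Lemma linear_map0 : h 0 = 0.
Proof. by rewrite -[0 in LHS](subrr 0) (zmod_morphism_linear h_lin) subrr. Qed.

Lemma linear_mapD x y : h (x + y) = h x + h y.
Proof. by have := h_lin 1 x y; rewrite !scale1r. Qed.

Lemma linear_mapZ a x : h (a *: x) = a *: h x.
Proof. by have := h_lin a x 0; rewrite !addr0 linear_map0 addr0. Qed.

Lemma linear_map_sum (I : Type) (s : seq I) (P : pred I) (F : I -> V) :
  h (\sum_(i <- s | P i) F i) = \sum_(i <- s | P i) h (F i).
Proof.
elim: s => [|i s IH]; first by rewrite !big_nil linear_map0.
by rewrite !big_cons; case: (P i); rewrite ?linear_mapD IH.
Qed.

End LinearMaps.

Section FiniteSupportSums.
Variables (V : nmodType) (T : choiceType).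

Lemma fsbigT_seq (s : seq T) (f : T -> V) : (forall a, a \notin s -> f a = 0) ->
  \sum_(a \in [set: T]) f a = \sum_(a <- undup s) f a.
Proof.
move=> hs; rewrite (fsbigTE [fset a | a in s]%fset); last first.
  by move=> i; rewrite inE /= => /hs.
apply: perm_big; apply: uniq_perm; rewrite ?fset_uniq ?undup_uniq //.
by move=> i; rewrite mem_undup !inE.
Qed.

Lemma fsbigT_single (b : T) (f : T -> V) : (forall a, a != b -> f a = 0) ->
  \sum_(a \in [set: T]) f a = f b.
Proof.
move=> hb; rewrite (@fsbigT_seq [:: b]) /= ?big_seq1 //.
by move=> a; rewrite inE => /hb.
Qed.

Lemma fsbigT_neq0 (f : T -> V) :
  \sum_(a \in [set: T]) f a != 0 -> exists a, f a != 0.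
Proof.
move=> h; apply: contra_notP (negP h) => hn; apply/eqP; apply: fsbig1 => a _.
by apply/eqP; apply: contra_notT hn => ha; exists a.
Qed.

End FiniteSupportSums.

Lemma linear_fsbigT (k : comPzRingType) (V W : lmodType k) (h : V -> W)
  (h_lin : linear h) (T : choiceType) (s : seq T) (f : T -> V) :
  (forall a, a \notin s -> f a = 0) ->
  h (\sum_(a \in [set: T]) f a) = \sum_(a \in [set: T]) h (f a).
Proof.
move=> hs; rewrite (fsbigT_seq hs) (@fsbigT_seq _ _ s) ?linear_map_sum //.
by move=> a /hs ->; rewrite linear_map0.
Qed.

Lemma fin_suppP (k : comPzRingType) (G : group) (T : G -> lmodType k)
  (f : forall a : G, T a) :
  fin_supp f -> exists s : seq G, forall a, a \notin s -> f a = 0.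
Proof. by case=> s hs; exists s => a ha; apply/eqP; apply: contraNT ha => /hs. Qed.

Section CategoryTheory.
Variables (k : comPzRingType) (C : precat k).

Definition hom_of_eq (x y : obj C) (e : x = y) : hom C x y := castH erefl e (idm x).

Lemma hom_of_eq_irr (x y : obj C) (e e' : x = y) : hom_of_eq e = hom_of_eq e'.
Proof. by rewrite (Prop_irrelevance e e'). Qed.

Lemma hom_of_eq_refl (x : obj C) (e : x = x) : hom_of_eq e = idm x.
Proof. by rewrite (Prop_irrelevance e erefl). Qed.

Hypothesis HC : is_cat C.

Lemma compA (x y z w : obj C) (h : hom C z w) (g : hom C y z) (f : hom C x y) :
  comp h (comp g f) = comp (comp h g) f.
Proof. by case: HC. Qed.

Lemma comp1l (x y : obj C) (f : hom C x y) : comp (idm y) f = f.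
Proof. by case: HC. Qed.

Lemma comp1r (x y : obj C) (f : hom C x y) : comp f (idm x) = f.
Proof. by case: HC. Qed.

Lemma compl_linear (x y z : obj C) (f : hom C x y) :
  linear (fun g : hom C y z => comp g f).
Proof. by case: HC => _ _ _ h _ a g1 g2; rewrite h. Qed.

Lemma compr_linear (x y z : obj C) (g : hom C y z) :
  linear (fun f : hom C x y => comp g f).
Proof. by case: HC => _ _ _ _ h a f1 f2; rewrite h. Qed.

Lemma comp0l (x y z : obj C) (f : hom C x y) : comp (0 : hom C y z) f = 0.
Proof. exact: (linear_map0 (@compl_linear x y z f)). Qed.

Lemma comp0r (x y z : obj C) (g : hom C y z) : comp g (0 : hom C x y) = 0.
Proof. exact: (linear_map0 (@compr_linear x y z g)). Qed.

Lemma compDl (x y z : obj C) (g1 g2 : hom C y z) (f : hom C x y) :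
  comp (g1 + g2) f = comp g1 f + comp g2 f.
Proof. exact: (linear_mapD (@compl_linear x y z f)). Qed.

Lemma compDr (x y z : obj C) (g : hom C y z) (f1 f2 : hom C x y) :
  comp g (f1 + f2) = comp g f1 + comp g f2.
Proof. exact: (linear_mapD (@compr_linear x y z g)). Qed.

Lemma compZl (x y z : obj C) a (g : hom C y z) (f : hom C x y) :
  comp (a *: g) f = a *: comp g f.
Proof. exact: (linear_mapZ (@compl_linear x y z f)). Qed.

Lemma compZr (x y z : obj C) a (g : hom C y z) (f : hom C x y) :
  comp g (a *: f) = a *: comp g f.
Proof. exact: (linear_mapZ (@compr_linear x y z g)). Qed.

Lemma comp_suml (x y z : obj C) (I : Type) (s : seq I) (P : pred I)
  (F : I -> hom C y z) (f : hom C x y) :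
  comp (\sum_(i <- s | P i) F i) f = \sum_(i <- s | P i) comp (F i) f.
Proof. exact: (linear_map_sum (@compl_linear x y z f)). Qed.

Lemma comp_sumr (x y z : obj C) (I : Type) (s : seq I) (P : pred I)
  (g : hom C y z) (F : I -> hom C x y) :
  comp g (\sum_(i <- s | P i) F i) = \sum_(i <- s | P i) comp g (F i).
Proof. exact: (linear_map_sum (@compr_linear x y z g)). Qed.

Lemma comp_fsbigl (x y z : obj C) (T : choiceType) (s : seq T)
  (F : T -> hom C y z) (f : hom C x y) : (forall a, a \notin s -> F a = 0) ->
  comp (\sum_(a \in [set: T]) F a) f = \sum_(a \in [set: T]) comp (F a) f.
Proof. exact: (linear_fsbigT (@compl_linear x y z f)). Qed.

Lemma comp_fsbigr (x y z : obj C) (T : choiceType) (s : seq T)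
  (g : hom C y z) (F : T -> hom C x y) : (forall a, a \notin s -> F a = 0) ->
  comp g (\sum_(a \in [set: T]) F a) = \sum_(a \in [set: T]) comp g (F a).
Proof. exact: (linear_fsbigT (@compr_linear x y z g)). Qed.

Lemma castHE (x x' y y' : obj C) (e1 : x = x') (e2 : y = y') (f : hom C x y) :
  castH e1 e2 f = comp (hom_of_eq e2) (comp f (hom_of_eq (esym e1))).
Proof. by case: x' / e1; case: y' / e2; rewrite /hom_of_eq /= comp1l comp1r. Qed.

Lemma castH_l (x y y' : obj C) (e : y = y') (f : hom C x y) :
  castH erefl e f = comp (hom_of_eq e) f.
Proof. by rewrite castHE comp1r. Qed.

Lemma comp_hom_of_eq (x y z : obj C) (e1 : x = y) (e2 : y = z) :
  comp (hom_of_eq e2) (hom_of_eq e1) = hom_of_eq (etrans e1 e2).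
Proof. by case: z / e2; case: y / e1; rewrite /= comp1l. Qed.

Lemma hom_of_eqK (x y : obj C) (e : x = y) :
  comp (hom_of_eq (esym e)) (hom_of_eq e) = idm x.
Proof. by rewrite comp_hom_of_eq hom_of_eq_refl. Qed.

Lemma hom_of_eqKV (x y : obj C) (e : x = y) :
  comp (hom_of_eq e) (hom_of_eq (esym e)) = idm y.
Proof. by rewrite comp_hom_of_eq hom_of_eq_refl. Qed.

Lemma hom_of_eq_conj_irr (x x' y y' : obj C) (f : hom C x y)
  (e1 e1' : y = y') (e2 e2' : x' = x) :
  comp (hom_of_eq e1) (comp f (hom_of_eq e2)) =
  comp (hom_of_eq e1') (comp f (hom_of_eq e2')).
Proof. by rewrite (hom_of_eq_irr e1 e1') (hom_of_eq_irr e2 e2'). Qed.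

Lemma iso_id (x : obj C) : is_iso (idm x).
Proof. by exists (idm x); rewrite comp1l. Qed.

Lemma iso_comp (x y z : obj C) (g : hom C y z) (f : hom C x y) :
  is_iso g -> is_iso f -> is_iso (comp g f).
Proof.
move=> [g' [g1 g2]] [f' [f1 f2]]; exists (comp f' g'); split.
  by rewrite compA -(compA f') g1 comp1r.
by rewrite compA -(compA g) f2 comp1r.
Qed.

Lemma iso_of_inv (x y : obj C) (f : hom C x y) (g : hom C y x) (h : hom C x y) :
  comp g f = idm x -> comp h g = idm y -> is_iso f.
Proof.
move=> gf hg; exists g; split => //.
by have -> : f = h by rewrite -(comp1r h) -gf compA hg comp1l.
Qed.

Lemma iso_inv (x y : obj C) (f : hom C x y) (hf : is_iso f) :
  {g : hom C y x | comp g f = idm x /\ comp f g = idm y}.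
Proof. exact: constructive_indefinite_description hf. Qed.

Lemma iso_cancel_l (x y z : obj C) (f : hom C y z) (g h : hom C x y) :
  is_iso f -> comp f g = comp f h -> g = h.
Proof.
move=> [f' [f1 _]] e.
by rewrite -(comp1l g) -(comp1l h) -f1 -!compA e.
Qed.

Lemma iso_cancel_r (x y z : obj C) (f : hom C x y) (g h : hom C y z) :
  is_iso f -> comp g f = comp h f -> g = h.
Proof.
move=> [f' [_ f2]] e.
by rewrite -(comp1r g) -(comp1r h) -f2 !compA e.
Qed.

Lemma iso_square_inv (x y x' y' : obj C) (u : hom C x y) (v : hom C x' y')
  (e : hom C x x') (e' : hom C y y') (i : hom C x' x) (i' : hom C y' y) :
  comp i e = idm x -> comp e i = idm x' ->
  comp i' e' = idm y -> comp e' i' = idm y' ->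
  comp e' u = comp v e -> comp i' v = comp u i.
Proof.
move=> ie ei i'e' ei' sq.
have e'_iso : is_iso e' by exists i'.
have e_iso : is_iso e by exists i.
apply: (iso_cancel_l e'_iso); apply: (iso_cancel_r e_iso).
by rewrite !compA ei' comp1l -!compA ie comp1r sq.
Qed.

End CategoryTheory.
Arguments hom_of_eq {k C x y}.

Section FunctorTheory.
Variables (k : comPzRingType) (C D : precat k) (F : functor C D).
Hypothesis HF : is_functor F.

Lemma fmapM (x y z : obj C) (g : hom C y z) (f : hom C x y) :
  fmap F (comp g f) = comp (fmap F g) (fmap F f).
Proof. by case: HF. Qed.

Lemma fmap1 (x : obj C) : fmap F (idm x) = idm (fobj F x).
Proof. by case: HF. Qed.

Lemma fmap_linear (x y : obj C) : linear (fun f : hom C x y => fmap F f).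
Proof. by case: HF => _ _ h a f g; rewrite h. Qed.

Lemma fmap0 (x y : obj C) : fmap F (0 : hom C x y) = 0.
Proof. exact: (linear_map0 (@fmap_linear x y)). Qed.

Lemma fmapD (x y : obj C) (f g : hom C x y) : fmap F (f + g) = fmap F f + fmap F g.
Proof. exact: (linear_mapD (@fmap_linear x y)). Qed.

Lemma fmapZ (x y : obj C) a (f : hom C x y) : fmap F (a *: f) = a *: fmap F f.
Proof. exact: (linear_mapZ (@fmap_linear x y)). Qed.

Lemma fmap_fsbigT (x y : obj C) (T : choiceType) (s : seq T) (f : T -> hom C x y) :
  (forall a, a \notin s -> f a = 0) ->
  fmap F (\sum_(a \in [set: T]) f a) = \sum_(a \in [set: T]) fmap F (f a).
Proof. exact: (linear_fsbigT (@fmap_linear x y)). Qed.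

Lemma fmap_hom_of_eq (x y : obj C) (e : x = y) :
  fmap F (hom_of_eq e) = hom_of_eq (f_equal (fobj F) e).
Proof. by case: y / e; rewrite /= fmap1. Qed.

Lemma fmap_iso (x y : obj C) (f : hom C x y) : is_iso f -> is_iso (fmap F f).
Proof. by move=> [g [g1 g2]]; exists (fmap F g); rewrite -!fmapM g1 g2 !fmap1. Qed.

End FunctorTheory.

Lemma fid_functor (k : comPzRingType) (C : precat k) : is_functor (fid C).
Proof. by split. Qed.

Lemma fcomp_functor (k : comPzRingType) (B C D : precat k) (F : functor B C)
  (K : functor C D) : is_functor F -> is_functor K -> is_functor (fcomp F K).
Proof.
move=> HF HK; split.
- by move=> x y z g f; rewrite /= (fmapM HF) (fmapM HK).
- by move=> x; rewrite /= (fmap1 HF) (fmap1 HK).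
- by move=> x y r f g; rewrite /= (fmapD HF) (fmapZ HF) (fmapD HK) (fmapZ HK).
Qed.

Lemma ginvf_ext (k : comPzRingType) (G : group) (C : precat k) (A : gaction G C)
  (D : precat k) (F : ginvf A D)
  (fm : forall x y, hom C x y -> hom D (fobj (gfun F) x) (fobj (gfun F) y))
  (ch : forall a x, hom D (fobj (gfun F) x) (fobj (gfun F) (act A a x))) :
  fm = @fmap _ _ _ (gfun F) -> ch = gadj F ->
  @GInv k G C A D (@Functor k C D (fobj (gfun F)) fm) ch = F.
Proof. by case: F fm ch => [[fo fmo] cho] fm ch /= -> ->. Qed.

Section Adjuster.
Variables (k : comPzRingType) (G : group) (C : precat k) (A : gaction G C).
Variables (D : precat k) (HD : is_cat D) (Fo : obj C -> obj D).
Variable psi : forall (a : G) (x : obj C), hom D (Fo x) (Fo (act A a x)).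
Hypothesis psi1 : forall x, psi (gone G) x = hom_of_eq (f_equal Fo (esym (act1 A x))).
Hypothesis psiM : forall a b x, comp (psi b (act A a x)) (psi a x) =
  comp (hom_of_eq (f_equal Fo (actM A a b x))) (psi (gmul b a) x).

Lemma adjuster_transport (c c' : G) (e : c = c') x :
  psi c' x = comp (hom_of_eq (f_equal (fun c => Fo (act A c x)) e)) (psi c x).
Proof. by case: c' / e; rewrite comp1l. Qed.

Lemma adjuster_left_inv a x :
  exists e, comp (psi (ginvg a) (act A a x)) (psi a x) = hom_of_eq e.
Proof.
rewrite psiM (adjuster_transport (esym (gmulVg a))) psi1 !comp_hom_of_eq //.
by eexists.
Qed.

(* Every psi a x has a left inverse up to a transport; so does that left
   inverse, which forces psi a x to be invertible. *)
Lemma adjuster_iso a x : is_iso (psi a x).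
Proof.
have [e1 E1] := adjuster_left_inv a x.
have [e2 E2] := adjuster_left_inv (ginvg a) (act A a x).
pose L := comp (hom_of_eq (esym e1)) (psi (ginvg a) (act A a x)).
pose M := comp (comp (hom_of_eq (esym e2))
  (psi (ginvg (ginvg a)) (act A (ginvg a) (act A a x)))) (hom_of_eq e1).
apply: (@iso_of_inv _ _ HD _ _ _ L M); first by rewrite /L -compA // E1 hom_of_eqK.
rewrite /M /L -!compA // (compA _ (hom_of_eq e1)) // hom_of_eqKV // comp1l //.
by rewrite E2 hom_of_eqK.
Qed.

End Adjuster.

Section GInvariantFunctors.
Variables (k : comPzRingType) (G : group) (C : precat k) (A : gaction G C).
Variables (D : precat k) (F : ginvf A D).
Hypotheses (HD : is_cat D) (HF : is_ginv F).

Lemma ginv_functor : is_functor (gfun F).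
Proof. by case: HF. Qed.

Lemma gadj_natural (a : G) (x y : obj C) (f : hom C x y) :
  comp (gadj F a y) (fmap (gfun F) f) = comp (fmap (gfun F) (actm A a f)) (gadj F a x).
Proof. by case: HF => _ [h _ _ _]; apply: h. Qed.

Lemma gadj1 (x : obj C) :
  gadj F (gone G) x = hom_of_eq (f_equal (fobj (gfun F)) (esym (act1 A x))).
Proof. by case: HF => _ [_ _ h _]; rewrite h castH_l // comp1r. Qed.

Lemma gadjM (a b : G) (x : obj C) :
  comp (gadj F b (act A a x)) (gadj F a x) =
  comp (hom_of_eq (f_equal (fobj (gfun F)) (actM A a b x))) (gadj F (gmul b a) x).
Proof. by case: HF => _ [_ _ _ h]; rewrite h castH_l. Qed.

End GInvariantFunctors.

Section GCategory.
Variables (k : comPzRingType) (G : group) (C : precat k) (A : gaction G C).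
Hypotheses (HC : is_cat C) (HA : is_gcat A).

Lemma actmM (a : G) (x y z : obj C) (g : hom C y z) (f : hom C x y) :
  actm A a (comp g f) = comp (actm A a g) (actm A a f).
Proof. by case: HA. Qed.

Lemma actm1 (a : G) (x : obj C) : actm A a (idm x) = idm (act A a x).
Proof. by case: HA. Qed.

Lemma actm_gone (x y : obj C) (f : hom C x y) :
  actm A 1g f = comp (hom_of_eq (esym (act1 A y))) (comp f (hom_of_eq (act1 A x))).
Proof.
case: HA => _ _ h _; rewrite h castHE //.
by rewrite (hom_of_eq_irr (esym (esym _)) (act1 A x)).
Qed.

Lemma actm_gmul (a b : G) (x y : obj C) (f : hom C x y) :
  actm A (b \* a) f = comp (hom_of_eq (esym (actM A a b y)))
    (comp (actm A b (actm A a f)) (hom_of_eq (actM A a b x))).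
Proof.
case: HA => _ _ _ h; rewrite h castHE //.
by rewrite (hom_of_eq_irr (esym (esym _)) (actM A a b x)).
Qed.

Lemma actm_hom_of_eq (a : G) (x y : obj C) (e : x = y) :
  actm A a (hom_of_eq e) = hom_of_eq (f_equal (act A a) e).
Proof. by case: y / e; rewrite /= actm1. Qed.

End GCategory.

Section PrecoveringMaps.
Variables (k : comPzRingType) (G : group) (C : precat k) (A : gaction G C).
Variables (D : precat k) (HD : is_cat D).

Lemma F1_whisker (D' : precat k) (K : functor D D') (F : ginvf A D) (x y : obj C)
  (g : forall a : G, hom C (act A a x) y) :
  is_functor (gfun F) -> is_functor K -> fin_supp g ->
  F1 (whisker K F) g = fmap K (F1 F g).
Proof.
move=> HF HK /fin_suppP [s hs]; rewrite /F1 (fmap_fsbigT HK (s := s)).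
  by apply: eq_fsbigr => a _; rewrite /= (fmapM HK).
by move=> a /hs ->; rewrite (fmap0 HF) comp0l.
Qed.

Lemma F1_natural (F F' : ginvf A D) (eta : ntrans (gfun F) (gfun F')) :
  is_functor (gfun F) -> is_functor (gfun F') ->
  is_natural eta ->
  (forall a x, comp (eta (act A a x)) (gadj F a x) = comp (gadj F' a x) (eta x)) ->
  forall (x y : obj C) (g : forall a : G, hom C (act A a x) y), fin_supp g ->
  comp (eta y) (F1 F g) = comp (F1 F' g) (eta x).
Proof.
move=> HF HF' eta_nat eta_adj x y g /fin_suppP [s hs].
rewrite /F1 (comp_fsbigr HD (s := s)); last first.
  by move=> a /hs ->; rewrite (fmap0 HF) comp0l.
rewrite (comp_fsbigl HD (s := s)); last by move=> a /hs ->; rewrite (fmap0 HF') comp0l.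
apply: eq_fsbigr => a _.
by rewrite !compA // eta_nat -!compA // eta_adj.
Qed.

End PrecoveringMaps.

Section OrbitCategory.
Variables (k : comPzRingType) (G : group) (C : precat k) (A : gaction G C).
Hypotheses (HC : is_cat C) (HA : is_gcat A).

Lemma fam_transport (x y : obj C) (f : ofam A x y) (b b' a a' : G)
  (eb : b = b') (ea : a = a') :
  f (b', a') = comp (hom_of_eq (f_equal (fun c => act A c y) eb))
    (comp (f (b, a)) (hom_of_eq (f_equal (fun c => act A c x) (esym ea)))).
Proof. by case: b' / eb; case: a' / ea; rewrite /= comp1l // comp1r. Qed.

Lemma fam_equivariant (x y : obj C) (f : ofam A x y) : orbit_prop f ->
  forall c b a, f (c \* b, c \* a) = comp (hom_of_eq (esym (actM A b c y)))
    (comp (actm A c (f (b, a))) (hom_of_eq (actM A a c x))).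
Proof.
case=> _ _ h c b a; rewrite h castHE //.
by rewrite (hom_of_eq_irr (esym (esym _)) (actM A a c x)).
Qed.

Lemma orbit_prop_monomial (x y : obj C) (f : ofam A x y) (sigma tau : G -> G) :
  cancel sigma tau -> (forall c b, sigma (c \* b) = c \* sigma b) ->
  (forall b a, a != sigma b -> f (b, a) = 0) ->
  (forall c b, f (c \* b, c \* sigma b) =
     castH (esym (actM A (sigma b) c x)) (esym (actM A b c y))
       (actm A c (f (b, sigma b)))) ->
  orbit_prop f.
Proof.
move=> sigmaK sigmaM f0 fdiag; split.
- move=> a; exists [:: tau a] => b; apply: contraR; rewrite inE => ne.
  by rewrite f0 //; apply: contra ne => /eqP ->; rewrite sigmaK.
- by move=> b; exists [:: sigma b] => a; apply: contraR; rewrite inE => /f0 ->.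
- move=> c b a; case: (eqVneq a (sigma b)) => [->|ne]; first exact: fdiag.
  rewrite !f0 ?linear0 ?castH0 // sigmaM.
  by apply: contra ne => /eqP /gmulgI ->.
Qed.

Lemma omkE (x y : obj C) (f : ofam A x y) : orbit_prop f -> proj1_sig (omk f) = f.
Proof. by move=> h; rewrite /omk; case: pselect. Qed.

Definition entry (x y : obj C) (f : orbhom A x y) (b a : G) :
  hom C (act A a x) (act A b y) := proj1_sig f (b, a).

Lemma entry_ext (x y : obj C) (f g : orbhom A x y) :
  (forall b a, entry f b a = entry g b a) -> f = g.
Proof. by move=> h; apply: orb_eq => -[b a]; apply: h. Qed.

Lemma entry_linear (x y : obj C) b a : linear (fun f : orbhom A x y => entry f b a).
Proof. by []. Qed.

Lemma entry_transport (x y : obj C) (f : orbhom A x y) (b b' a a' : G)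
  (eb : b = b') (ea : a = a') :
  entry f b' a' = comp (hom_of_eq (f_equal (fun c => act A c y) eb))
    (comp (entry f b a) (hom_of_eq (f_equal (fun c => act A c x) (esym ea)))).
Proof. exact: fam_transport. Qed.

Lemma entry_equivariant (x y : obj C) (f : orbhom A x y) c b a :
  entry f (c \* b) (c \* a) = comp (hom_of_eq (esym (actM A b c y)))
    (comp (actm A c (entry f b a)) (hom_of_eq (actM A a c x))).
Proof. exact: (fam_equivariant (proj2_sig f)). Qed.

Lemma entry_col_finite (x y : obj C) (f : orbhom A x y) a :
  exists s : seq G, forall b, b \notin s -> entry f b a = 0.
Proof.
case: (proj2_sig f) => h _ _; case: (h a) => s hs; exists s => b hb.
by apply/eqP; apply: contraNT hb => /hs.
Qed.

Lemma entry_row_finite (x y : obj C) (f : orbhom A x y) b :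
  exists s : seq G, forall a, a \notin s -> entry f b a = 0.
Proof.
case: (proj2_sig f) => _ h _; case: (h b) => s hs; exists s => a ha.
by apply/eqP; apply: contraNT ha => /hs.
Qed.

Definition fam_comp (x y z : obj C) (g : ofam A y z) (f : ofam A x y) : ofam A x z :=
  fun p => \sum_(b \in [set: G])
    (comp (g (p.1, b)) (f (b, p.2)) : hom C (act A p.2 x) (act A p.1 z)).

Lemma orbit_prop_comp (x y z : obj C) (g : ofam A y z) (f : ofam A x y) :
  orbit_prop g -> orbit_prop f -> orbit_prop (fam_comp g f).
Proof.
move=> hg hf; move: (hg) (hf) => [cg rg _] [cf rf _].
have [sg Hsg] := choice cg; have [sf Hsf] := choice rf.
have nz c a b : comp (g (c, b)) (f (b, a)) != 0 -> g (c, b) != 0 /\ f (b, a) != 0.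
  by move=> h; split; apply: contraNneq h => ->; rewrite ?comp0l ?comp0r.
split.
- move=> a; case: (cf a) => s hs; exists (flatten (map sg s)) => c.
  move=> /fsbigT_neq0 [b /nz [/Hsg h1 /hs h2]].
  by apply/flattenP; exists (sg b) => //; apply: map_f.
- move=> c; case: (rg c) => s hs; exists (flatten (map sf s)) => a.
  move=> /fsbigT_neq0 [b /nz [/hs h1 /Hsf h2]].
  by apply/flattenP; exists (sf b) => //; apply: map_f.
- move=> c b a; rewrite /fam_comp /= castHE //.
  rewrite (hom_of_eq_irr (esym (esym _)) (actM A a c x)).
  rewrite (@reindex_fsbigT (hom C (act A (c \* a) x) (act A (c \* b) z)) _ _ _ _ _
    (fun d => comp (g (c \* b, d)) (f (d, c \* a))) (gmul_bij c)).
  pose Phi (h : hom C (act A a x) (act A b z)) := comp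
    (hom_of_eq (esym (actM A b c z))) (comp (actm A c h) (hom_of_eq (actM A a c x))).
  have Phi_lin : linear Phi.
    move=> r u v; rewrite /Phi linearD linearZ /=.
    by rewrite compDl // compZl // compDr // compZr.
  case: (cf a) => s hs.
  rewrite -[RHS]/(Phi _) (linear_fsbigT Phi_lin (s := s)); last first.
    by move=> d hd; apply/eqP; apply: contraNT hd => /nz [_ /hs].
  apply: eq_fsbigr => d _; rewrite (fam_equivariant hg) (fam_equivariant hf).
  rewrite /Phi actmM // !compA // -(compA _ _ (hom_of_eq (actM A d c y))) //.
  by rewrite hom_of_eqKV // comp1r // -!compA.
Qed.

Lemma entry_comp (x y z : obj C) (g : orbhom A y z) (f : orbhom A x y) (b a : G) :
  entry (ocomp g f) b a =
  \sum_(c \in [set: G]) (comp (entry g b c) (entry f c a) : hom C _ _).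
Proof.
rewrite /entry; change (proj1_sig (omk (fam_comp (proj1_sig g) (proj1_sig f))) (b, a)
  = fam_comp (proj1_sig g) (proj1_sig f) (b, a)).
by rewrite omkE //; apply: orbit_prop_comp; [exact: (proj2_sig g)|exact: (proj2_sig f)].
Qed.

Definition fam_id (x : obj C) : ofam A x x := fun p : G * G =>
  match pselect (p.2 = p.1) with
  | left e => castH erefl (f_equal (fun c => act A c x) e) (idm (act A p.2 x))
  | right _ => 0
  end.

Lemma fam_id_diag (x : obj C) b :
  (fam_id x (b, b) : hom C (act A b x) (act A b x)) = idm (act A b x).
Proof. by rewrite /fam_id /=; case: pselect => // e; apply: hom_of_eq_refl. Qed.

Lemma fam_id_offdiag (x : obj C) b a :
  a != b -> (fam_id x (b, a) : hom C (act A a x) (act A b x)) = 0.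
Proof. by move=> /eqP ne; rewrite /fam_id /=; case: pselect. Qed.

Lemma orbit_prop_id (x : obj C) : orbit_prop (fam_id x).
Proof.
apply: (@orbit_prop_monomial _ _ _ id id) => // [b a|c b]; first exact: fam_id_offdiag.
rewrite !fam_id_diag actm1 //=.
by rewrite (castHE HC) comp1l // comp_hom_of_eq // hom_of_eq_refl.
Qed.

Definition fam_P (x y : obj C) (f : hom C x y) : ofam A x y := fun p : G * G =>
  match pselect (p.2 = p.1) with
  | left e => castH erefl (f_equal (fun c => act A c y) e) (actm A p.2 f)
  | right _ => 0
  end.

Lemma fam_P_diag (x y : obj C) (f : hom C x y) b :
  (fam_P f (b, b) : hom C (act A b x) (act A b y)) = actm A b f.
Proof.
by rewrite /fam_P /=; case: pselect => // e; rewrite (Prop_irrelevance e erefl).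
Qed.

Lemma fam_P_offdiag (x y : obj C) (f : hom C x y) b a :
  a != b -> (fam_P f (b, a) : hom C (act A a x) (act A b y)) = 0.
Proof. by move=> /eqP ne; rewrite /fam_P /=; case: pselect. Qed.

Lemma orbit_prop_P (x y : obj C) (f : hom C x y) : orbit_prop (fam_P f).
Proof.
apply: (@orbit_prop_monomial _ _ _ id id) => // [b a|c b]; first exact: fam_P_offdiag.
rewrite !fam_P_diag actm_gmul // castHE //.
by rewrite (hom_of_eq_irr (esym (esym _)) (actM A b c x)).
Qed.

Definition fam_phi (mu : G) (x : obj C) : ofam A x (act A mu x) := fun p : G * G =>
  match pselect (p.2 = gmul p.1 mu) with
  | left e => castH erefl (etrans (f_equal (fun c => act A c x) e) (actM A mu p.1 x))
                (idm (act A p.2 x))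
  | right _ => 0
  end.

Lemma fam_phi_diag mu (x : obj C) b :
  (fam_phi mu x (b, b \* mu) : hom C (act A (b \* mu) x) (act A b (act A mu x))) =
  hom_of_eq (actM A mu b x).
Proof. by rewrite /fam_phi /=; case: pselect => // e; apply: hom_of_eq_irr. Qed.

Lemma fam_phi_offdiag mu (x : obj C) b a : a != b \* mu ->
  (fam_phi mu x (b, a) : hom C (act A a x) (act A b (act A mu x))) = 0.
Proof. by move=> /eqP ne; rewrite /fam_phi /=; case: pselect. Qed.

Lemma orbit_prop_phi mu (x : obj C) : orbit_prop (fam_phi mu x).
Proof.
apply: (@orbit_prop_monomial _ _ _ (fun b => b \* mu) (fun a => a \* ginvg mu)).
- by move=> b; rewrite gmulgK.
- by move=> c b; rewrite gmulA.
- exact: fam_phi_offdiag.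
move=> c b.
rewrite (fam_transport (fam_phi mu x) (erefl (c \* b)) (esym (gmulA c b mu))).
rewrite !fam_phi_diag actm_hom_of_eq // castHE // !comp_hom_of_eq //.
exact: hom_of_eq_irr.
Qed.

Lemma entry_id_diag (x : obj C) b : entry (oid A x) b b = idm (act A b x).
Proof.
rewrite /entry; change (proj1_sig (omk (fam_id x)) (b, b) = idm (act A b x)).
by rewrite omkE ?fam_id_diag //; apply: orbit_prop_id.
Qed.

Lemma entry_id_offdiag (x : obj C) b a : a != b -> entry (oid A x) b a = 0.
Proof.
rewrite /entry; change (a != b -> proj1_sig (omk (fam_id x)) (b, a) = 0).
by rewrite omkE; [exact: fam_id_offdiag | exact: orbit_prop_id].
Qed.

Lemma entry_P_diag (x y : obj C) (f : hom C x y) b :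
  entry (fmap (orbitP A) f) b b = actm A b f.
Proof.
rewrite /entry; change (proj1_sig (omk (fam_P f)) (b, b) = actm A b f).
by rewrite omkE ?fam_P_diag //; apply: orbit_prop_P.
Qed.

Lemma entry_P_offdiag (x y : obj C) (f : hom C x y) b a :
  a != b -> entry (fmap (orbitP A) f) b a = 0.
Proof.
rewrite /entry; change (a != b -> proj1_sig (omk (fam_P f)) (b, a) = 0).
by rewrite omkE; [exact: fam_P_offdiag | exact: orbit_prop_P].
Qed.

Lemma entry_phi_diag mu (x : obj C) b :
  entry (orbit_phi A mu x) b (b \* mu) = hom_of_eq (actM A mu b x).
Proof.
rewrite /entry; change (proj1_sig (omk (fam_phi mu x)) (b, b \* mu) =
  hom_of_eq (actM A mu b x)).
by rewrite omkE ?fam_phi_diag //; apply: orbit_prop_phi.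
Qed.

Lemma entry_phi_offdiag mu (x : obj C) b a :
  a != b \* mu -> entry (orbit_phi A mu x) b a = 0.
Proof.
rewrite /entry; change (a != b \* mu -> proj1_sig (omk (fam_phi mu x)) (b, a) = 0).
by rewrite omkE; [exact: fam_phi_offdiag | exact: orbit_prop_phi].
Qed.

Lemma ocompA (x y z w : obj C) (h : orbhom A z w) (g : orbhom A y z)
  (f : orbhom A x y) : ocomp h (ocomp g f) = ocomp (ocomp h g) f.
Proof.
apply: entry_ext => b a; rewrite !entry_comp.
have [rh Hrh] := entry_row_finite h b; have [cf Hcf] := entry_col_finite f a.
transitivity (\sum_(c <- undup rh) \sum_(d <- undup cf)
   (comp (entry h b c) (comp (entry g c d) (entry f d a)) : hom C _ _)).
  rewrite (fsbigT_seq (s := rh)); last by move=> c /Hrh ->; rewrite comp0l.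
  apply: eq_bigr => c _; rewrite entry_comp (fsbigT_seq (s := cf)) ?comp_sumr //.
  by move=> d /Hcf ->; rewrite comp0r.
rewrite exchange_big /= (fsbigT_seq (s := cf)); last first.
  by move=> d /Hcf ->; rewrite comp0r.
apply: eq_bigr => d _; rewrite entry_comp (fsbigT_seq (s := rh)) ?comp_suml //.
  by apply: eq_bigr => c _; rewrite compA.
by move=> c /Hrh ->; rewrite comp0l.
Qed.

Lemma ocomp1l (x y : obj C) (f : orbhom A x y) : ocomp (oid A y) f = f.
Proof.
apply: entry_ext => b a; rewrite entry_comp (fsbigT_single (b := b)) /=.
  by rewrite entry_id_diag comp1l.
by move=> c ne; rewrite entry_id_offdiag // comp0l.
Qed.

Lemma ocomp1r (x y : obj C) (f : orbhom A x y) : ocomp f (oid A x) = f.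
Proof.
apply: entry_ext => b a; rewrite entry_comp (fsbigT_single (b := a)) /=.
  by rewrite entry_id_diag comp1r.
by move=> c ne; rewrite entry_id_offdiag 1?eq_sym // comp0r.
Qed.

Lemma ocomp_linearl (x y z : obj C) (f : orbhom A x y) :
  linear (fun g : orbhom A y z => ocomp g f).
Proof.
move=> r g1 g2; apply: entry_ext => b a; rewrite entry_linear !entry_comp.
have [cf Hcf] := entry_col_finite f a.
rewrite !(fsbigT_seq (s := cf)); try by move=> c /Hcf ->; rewrite comp0r.
rewrite scaler_sumr -big_split; apply: eq_bigr => c _.
by rewrite entry_linear compDl // compZl.
Qed.

Lemma ocomp_linearr (x y z : obj C) (g : orbhom A y z) :
  linear (fun f : orbhom A x y => ocomp g f).
Proof.
move=> r f1 f2; apply: entry_ext => b a; rewrite entry_linear !entry_comp.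
have [rg Hrg] := entry_row_finite g b.
rewrite !(fsbigT_seq (s := rg)); try by move=> c /Hrg ->; rewrite comp0l.
rewrite scaler_sumr -big_split; apply: eq_bigr => c _.
by rewrite entry_linear compDr // compZr.
Qed.

Lemma orbit_cat_is_cat : is_cat (orbit_cat A).
Proof.
split.
- exact: ocompA.
- exact: ocomp1l.
- exact: ocomp1r.
- by move=> x y z r g1 g2 f; apply: ocomp_linearl.
- by move=> x y z r g f1 f2; apply: ocomp_linearr.
Qed.

Lemma entry_castH (x x' y y' : obj C) (e1 : x = x') (e2 : y = y')
  (f : hom (orbit_cat A) x y) b a :
  entry (@castH _ (orbit_cat A) _ _ _ _ e1 e2 f) b a =
  comp (hom_of_eq (f_equal (act A b) e2))
    (comp (entry f b a) (hom_of_eq (f_equal (act A a) (esym e1)))).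
Proof. by case: x' / e1; case: y' / e2; rewrite /= /hom_of_eq /= comp1l // comp1r. Qed.

Lemma orbitP_functor : is_functor (orbitP A).
Proof.
split.
- move=> x y z g f; apply: entry_ext => b a.
  rewrite entry_comp (fsbigT_single (b := b)) /=.
    case: (eqVneq a b) => [->|ne]; first by rewrite !entry_P_diag actmM.
    by rewrite (entry_P_offdiag _ ne) (entry_P_offdiag _ ne) comp0r.
  by move=> c ne; rewrite entry_P_offdiag // comp0l.
- move=> x; apply: entry_ext => b a; case: (eqVneq a b) => [->|ne].
    by rewrite entry_P_diag entry_id_diag actm1.
  by rewrite entry_P_offdiag // entry_id_offdiag.
- move=> x y r f g; apply: entry_ext => b a; rewrite entry_linear.
  case: (eqVneq a b) => [->|ne]; first by rewrite !entry_P_diag linearD linearZ.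
  by rewrite !entry_P_offdiag // scaler0 addr0.
Qed.

Lemma orbit_phi1 (x : obj C) : orbit_phi A 1g x =
  @hom_of_eq _ (orbit_cat A) _ _ (f_equal (fun x => x) (esym (act1 A x))).
Proof.
apply: entry_ext => b a; rewrite /hom_of_eq entry_castH.
case: (eqVneq a b) => [->|ne].
  rewrite (entry_transport _ (erefl b) (gmulg1 b)) entry_phi_diag entry_id_diag.
  by rewrite comp1l // !comp_hom_of_eq //; apply: hom_of_eq_irr.
by rewrite entry_phi_offdiag ?gmulg1 // entry_id_offdiag // comp0l // comp0r.
Qed.

Lemma orbit_phiM (a b : G) (x : obj C) :
  ocomp (orbit_phi A b (act A a x)) (orbit_phi A a x) =
  ocomp (@hom_of_eq _ (orbit_cat A) _ _ (f_equal (fun x => x) (actM A a b x)))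
    (orbit_phi A (b \* a) x).
Proof.
rewrite -[RHS](castH_l orbit_cat_is_cat); apply: entry_ext => c d.
rewrite entry_castH entry_comp (fsbigT_single (b := c \* b)) /=; last first.
  by move=> e ne; rewrite entry_phi_offdiag // comp0l.
case: (eqVneq d (c \* b \* a)) => [->|ne].
  rewrite !entry_phi_diag (entry_transport _ (erefl c) (gmulA c b a)) entry_phi_diag.
  by rewrite !comp_hom_of_eq //; apply: hom_of_eq_irr.
rewrite [entry (orbit_phi A a x) _ _]entry_phi_offdiag // comp0r //.
by rewrite entry_phi_offdiag ?comp0l ?comp0r // gmulA.
Qed.

Lemma orbit_phi_adjuster : @is_adjuster _ _ _ A _ (orbitP A) (orbit_phi A).
Proof.
have OC := orbit_cat_is_cat; split.
- move=> a x y f; apply: entry_ext => b c; rewrite !entry_comp.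
  rewrite (fsbigT_single (b := c)); last first.
    by move=> d ne; rewrite entry_P_offdiag 1?eq_sym // comp0r.
  rewrite (fsbigT_single (b := b)); last first.
    by move=> d ne; rewrite entry_P_offdiag // comp0l.
  rewrite /= !entry_P_diag; case: (eqVneq c (b \* a)) => [->|ne].
    by rewrite !entry_phi_diag actm_gmul // compA // hom_of_eqKV // comp1l.
  by rewrite !entry_phi_offdiag // comp0l // comp0r.
- by move=> a x; apply: (adjuster_iso OC orbit_phi1 orbit_phiM).
- by move=> x; rewrite (castH_l OC) (comp1r OC); exact: orbit_phi1.
- by move=> a b x; rewrite (castH_l OC); exact: orbit_phiM.
Qed.

Lemma orbitPphi_ginv : is_ginv (orbitPphi A).
Proof. by split; [exact: orbitP_functor | exact: orbit_phi_adjuster]. Qed.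

(* The inverse of F^(1) for (P, phi): a morphism of C/G is determined by its
   row of index 1, read as a finitely supported family of morphisms of C. *)
Definition coeffs (x y : obj C) (f : orbhom A x y) (a : G) : hom C (act A a x) y :=
  comp (hom_of_eq (act1 A y)) (entry f 1g a).

Lemma coeffs_finite (x y : obj C) (f : orbhom A x y) :
  exists s : seq G, forall a, a \notin s -> coeffs f a = 0.
Proof.
have [s hs] := entry_row_finite f 1g.
by exists s => a /hs; rewrite /coeffs => ->; rewrite comp0r.
Qed.

Lemma fin_supp_coeffs (x y : obj C) (f : orbhom A x y) : fin_supp (coeffs f).
Proof.
have [s hs] := coeffs_finite f.
by exists s => a; apply: contraR => /hs ->; rewrite eqxx.
Qed.

Lemma coeffs_linear (x y : obj C) a : linear (fun f : orbhom A x y => coeffs f a).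
Proof. by move=> r f g; rewrite /coeffs entry_linear compDr // compZr. Qed.

Lemma entry_F1P (x y : obj C) (g : forall a : G, hom C (act A a x) y) :
  fin_supp g -> forall b d, exists e,
  entry (F1 (orbitPphi A) g) b d = comp (actm A b (g (ginvg b \* d))) (hom_of_eq e).
Proof.
move=> /fin_suppP [s hs] b d; have OC := orbit_cat_is_cat.
rewrite /F1 (linear_fsbigT (entry_linear b d) (s := s)); last first.
  by move=> a /hs ->; rewrite (fmap0 orbitP_functor) (comp0l OC).
have entry_Pphi a : entry (comp (fmap (orbitP A) (g a)) (orbit_phi A a x)) b d =
    comp (actm A b (g a)) (entry (orbit_phi A a x) b d).
  rewrite /= entry_comp (fsbigT_single (b := b)) /= ?entry_P_diag //.
  by move=> c nc; rewrite entry_P_offdiag // comp0l.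
rewrite (fsbigT_single (b := ginvg b \* d)) /=; last first.
  move=> a ne; rewrite entry_Pphi entry_phi_offdiag ?comp0r //.
  by apply: contra ne => /eqP ->; rewrite gmulKg.
rewrite entry_Pphi (entry_transport _ (erefl b) (gmulKVg b d)) entry_phi_diag.
by rewrite !comp_hom_of_eq //; eexists.
Qed.

Lemma coeffs_F1P (x y : obj C) (g : forall a : G, hom C (act A a x) y) :
  fin_supp g -> coeffs (F1 (orbitPphi A) g) = g.
Proof.
move=> fg; apply: functional_extensionality_dep => a; rewrite /coeffs.
have [e ->] := entry_F1P fg 1g a.
move: e; rewrite (_ : ginvg 1g \* a = a); last by rewrite -{2}(gmulKg 1g a) gmul1g.
move=> e; rewrite actm_gone // -[fobj _ y]/y !compA // hom_of_eqKV // comp1l //.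
by rewrite -compA // comp_hom_of_eq // hom_of_eq_refl comp1r.
Qed.

Lemma F1P_coeffs (x y : obj C) (f : orbhom A x y) : F1 (orbitPphi A) (coeffs f) = f.
Proof.
apply: entry_ext => b d; have [e ->] := entry_F1P (fin_supp_coeffs f) b d.
rewrite (entry_transport f (gmulg1 b) (gmulKVg b d)) entry_equivariant.
rewrite /coeffs actmM // actm_hom_of_eq // -!compA // !comp_hom_of_eq //.
rewrite !compA // !comp_hom_of_eq // -!compA //; apply: hom_of_eq_conj_irr.
Qed.

Lemma orbitPphi_precovering : is_precovering (orbitPphi A).
Proof.
move=> x y; split.
  by move=> f g ff fg e; rewrite -(coeffs_F1P ff) -(coeffs_F1P fg) e.
by move=> h; exists (coeffs h); [exact: fin_supp_coeffs | exact: F1P_coeffs].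
Qed.

Lemma fmap_orbit (E : precat k) (L : functor (orbit_cat A) E)
  (x y : obj C) (f : orbhom A x y) :
  is_functor L -> fmap L f = F1 (whisker L (orbitPphi A)) (coeffs f).
Proof.
move=> HL; rewrite (F1_whisker (F := orbitPphi A) orbit_cat_is_cat orbitP_functor HL).
  by rewrite F1P_coeffs.
exact: fin_supp_coeffs.
Qed.

Lemma orbit_whisker_natiso (E : precat k) (HE : is_cat E)
  (L L' : functor (orbit_cat A) E) : is_functor L -> is_functor L' ->
  ginvf_iso (whisker L (orbitPphi A)) (whisker L' (orbitPphi A)) ->
  nat_isomorphic L L'.
Proof.
move=> HL HL' [th [th_nat th_iso th_adj]]; exists th; split => // x y f.
rewrite (fmap_orbit f HL) (fmap_orbit f HL').
apply: (F1_natural HE _ _ th_nat th_adj); last exact: fin_supp_coeffs.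
  exact: fcomp_functor orbitP_functor HL.
exact: fcomp_functor orbitP_functor HL'.
Qed.

Lemma fam_transport_index (z y : obj C) (g : forall c : G, hom C (act A c z) y)
  (c c' : G) (e : c = c') :
  g c' = comp (g c) (hom_of_eq (f_equal (fun c => act A c z) (esym e))).
Proof. by case: c' / e; rewrite comp1r. Qed.

Lemma act_shift (a : G) (x : obj C) (c : G) :
  act A c x = act A (c \* ginvg a) (act A a x).
Proof. by rewrite -actM gmulgKV. Qed.

Section Lift.
Variables (E : precat k) (Ec : ginvf A E).
Hypotheses (HE : is_cat E) (HEc : is_ginv Ec).
Local Notation Ef := (gfun Ec).
Local Notation chi := (gadj Ec).

Let HEf : is_functor Ef := ginv_functor HEc.

Definition lift_map (x y : obj C) (f : orbhom A x y) : hom E (fobj Ef x) (fobj Ef y) :=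
  F1 Ec (coeffs f).

Definition lift : functor (orbit_cat A) E :=
  @Functor k (orbit_cat A) E (fobj Ef) lift_map.

Lemma lift_map_linear (x y : obj C) : linear (@lift_map x y).
Proof.
move=> r f g; rewrite /lift_map /F1.
have [s1 h1] := coeffs_finite f; have [s2 h2] := coeffs_finite g.
have out12 a : a \notin s1 ++ s2 -> coeffs f a = 0 /\ coeffs g a = 0.
  by rewrite mem_cat negb_or => /andP [/h1 ? /h2 ?].
rewrite !(fsbigT_seq (s := s1 ++ s2)); try by move=> a /out12 [e1 e2];
  rewrite ?coeffs_linear ?e1 ?e2 ?scaler0 ?addr0 (fmap0 HEf) comp0l.
rewrite scaler_sumr -big_split; apply: eq_bigr => a _.
by rewrite coeffs_linear (fmapD HEf) compDl // (fmapZ HEf) compZl.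
Qed.

Lemma coeffs_compP (x' x y : obj C) (h : orbhom A x y) (u : hom C x' x) c :
  coeffs (ocomp h (fmap (orbitP A) u)) c = comp (coeffs h c) (actm A c u).
Proof.
rewrite /coeffs entry_comp (fsbigT_single (b := c)) /=.
  by rewrite entry_P_diag compA.
by move=> d ne; rewrite entry_P_offdiag 1?eq_sym // comp0r.
Qed.

Lemma lift_map_compP (x' x y : obj C) (h : orbhom A x y) (u : hom C x' x) :
  lift_map (ocomp h (fmap (orbitP A) u)) = comp (lift_map h) (fmap Ef u).
Proof.
have [s hs] := coeffs_finite h.
rewrite /lift_map /F1 (comp_fsbigl HE (s := s)); last first.
  by move=> a /hs ->; rewrite (fmap0 HEf) comp0l.
apply: eq_fsbigr => c _; rewrite coeffs_compP (fmapM HEf) -compA //.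
by rewrite -(gadj_natural HEc) compA.
Qed.

Lemma coeffs_compphi (a : G) (x y : obj C) (h : orbhom A (act A a x) y) c :
  coeffs (ocomp h (orbit_phi A a x)) c =
  comp (coeffs h (c \* ginvg a)) (hom_of_eq (act_shift a x c)).
Proof.
rewrite /coeffs entry_comp (fsbigT_single (b := c \* ginvg a)) /=.
  rewrite (entry_transport _ (erefl _) (gmulgKV a c)) entry_phi_diag.
  by rewrite !comp_hom_of_eq // -compA //; apply: hom_of_eq_conj_irr.
move=> d ne; rewrite entry_phi_offdiag ?comp0r //.
by apply: contra ne => /eqP ->; rewrite gmulgK.
Qed.

Lemma lift_map_compphi (a : G) (x y : obj C) (h : orbhom A (act A a x) y) :
  lift_map (ocomp h (orbit_phi A a x)) = comp (lift_map h) (chi a x).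
Proof.
have [s hs] := coeffs_finite h.
rewrite /lift_map /F1 (comp_fsbigl HE (s := s)); last first.
  by move=> d /hs ->; rewrite (fmap0 HEf) comp0l.
rewrite (@reindex_fsbigT _ _ _ _ _ _ _ (gmulr_bij a)).
apply: eq_fsbigr => d _; rewrite /= coeffs_compphi.
rewrite (fam_transport_index (coeffs h) (esym (gmulgK a d))).
rewrite !(fmapM HEf) !(fmap_hom_of_eq HEf) -!compA //.
rewrite [X in comp _ (comp _ X)]compA // comp_hom_of_eq // (gadjM HE HEc).
by congr (comp _ (comp _ (comp _ _))); apply: hom_of_eq_irr.
Qed.

Lemma lift_map_id (x : obj C) : lift_map (oid A x) = idm (fobj Ef x).
Proof.
rewrite /lift_map /F1 (fsbigT_single (b := 1g)) /=.
  rewrite /coeffs entry_id_diag comp1r // (fmap_hom_of_eq HEf) (gadj1 HE HEc).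
  by rewrite comp_hom_of_eq // hom_of_eq_refl.
by move=> c ne; rewrite /coeffs entry_id_offdiag // comp0r // (fmap0 HEf) comp0l.
Qed.

Lemma lift_map_comp (x y z : obj C) (g : orbhom A y z) (f : orbhom A x y) :
  lift_map (ocomp g f) = comp (lift_map g) (lift_map f).
Proof.
have OC := orbit_cat_is_cat; have [s hs] := coeffs_finite f.
have vanish a : a \notin s ->
    ocomp (fmap (orbitP A) (coeffs f a)) (orbit_phi A a x) = 0.
  by move=> /hs ->; rewrite (fmap0 orbitP_functor); exact: (comp0l OC).
have -> : ocomp g f = \sum_(a \in [set: G])
    ocomp g (ocomp (fmap (orbitP A) (coeffs f a)) (orbit_phi A a x)).
  by rewrite -{1}(F1P_coeffs f); exact: (comp_fsbigr OC (s := s) g vanish).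
rewrite (linear_fsbigT (@lift_map_linear x z) (s := s)); last first.
  by move=> a /vanish ->; exact: (comp0r OC).
rewrite {3}/lift_map /F1 (comp_fsbigr HE (s := s)); last first.
  by move=> a /hs ->; rewrite (fmap0 HEf) comp0l.
apply: eq_fsbigr => a _.
by rewrite ocompA lift_map_compphi lift_map_compP -compA.
Qed.

Lemma lift_functor : is_functor lift.
Proof.
split.
- exact: lift_map_comp.
- exact: lift_map_id.
- exact: lift_map_linear.
Qed.

Lemma lift_map_P (x y : obj C) (u : hom C x y) :
  lift_map (fmap (orbitP A) u) = fmap Ef u.
Proof. by rewrite -(ocomp1l (fmap (orbitP A) u)) lift_map_compP lift_map_id comp1l. Qed.

Lemma lift_map_phi (a : G) (x : obj C) : lift_map (orbit_phi A a x) = chi a x.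
Proof. by rewrite -(ocomp1l (orbit_phi A a x)) lift_map_compphi lift_map_id comp1l. Qed.

Lemma lift_whisker : whisker lift (orbitPphi A) = Ec.
Proof.
apply: ginvf_ext; apply: functional_extensionality_dep => x.
  do 2 apply: functional_extensionality_dep => ?; exact: lift_map_P.
by apply: functional_extensionality_dep => ?; exact: lift_map_phi.
Qed.

End Lift.

End OrbitCategory.

Section NaturalIsomorphisms.
Variables (k : comPzRingType) (C D : precat k) (HD : is_cat D).

Lemma natiso_refl (F : functor C D) : nat_isomorphic F F.
Proof.
exists (fun x => idm (fobj F x)); split; last by move=> x; apply: iso_id.
by move=> x y f; rewrite comp1l // comp1r.
Qed.

Lemma natiso_sym (F F' : functor C D) : nat_isomorphic F F' -> nat_isomorphic F' F.
Proof.
move=> [eta [eta_nat eta_iso]].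
pose inv x := proj1_sig (iso_inv (eta_iso x)).
have invP x : comp (inv x) (eta x) = idm _ /\ comp (eta x) (inv x) = idm _.
  exact: (proj2_sig (iso_inv (eta_iso x))).
exists inv; split; last by move=> x; exists (eta x); case: (invP x).
move=> x y f; have [ix xi] := invP x; have [iy yi] := invP y.
exact: (iso_square_inv HD ix xi iy yi (eta_nat x y f)).
Qed.

Lemma natiso_trans (F F' F'' : functor C D) :
  nat_isomorphic F F' -> nat_isomorphic F' F'' -> nat_isomorphic F F''.
Proof.
move=> [e1 [n1 i1]] [e2 [n2 i2]]; exists (fun x => comp (e2 x) (e1 x)); split.
  by move=> x y f; rewrite -compA // n1 compA // n2 -compA.
by move=> x; apply: iso_comp.
Qed.

Lemma natiso_fcompl (E : precat k) (F F' : functor D E) (H : functor C D) :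
  nat_isomorphic F F' -> nat_isomorphic (fcomp H F) (fcomp H F').
Proof.
move=> [e [n i]]; exists (fun x => e (fobj H x)); split; last by move=> x; apply: i.
by move=> x y f; apply: n.
Qed.

End NaturalIsomorphisms.

Lemma natiso_fcompr (k : comPzRingType) (B C D : precat k) (F F' : functor B C)
  (K : functor C D) : is_functor K ->
  nat_isomorphic F F' -> nat_isomorphic (fcomp F K) (fcomp F' K).
Proof.
move=> HK [e [n i]]; exists (fun x => fmap K (e x)); split.
  by move=> x y f; rewrite /= -!(fmapM HK) n.
by move=> x; apply: (fmap_iso HK).
Qed.

Section GInvariantIsomorphisms.
Variables (k : comPzRingType) (G : group) (C : precat k) (A : gaction G C).
Variables (D : precat k) (HD : is_cat D).

Lemma giso_refl (F : ginvf A D) : ginvf_iso F F.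
Proof.
exists (fun x => idm _); split.
- by move=> x y f; rewrite comp1l // comp1r.
- by move=> x; apply: iso_id.
- by move=> a x; rewrite comp1l // comp1r.
Qed.

Lemma giso_sym (F F' : ginvf A D) : ginvf_iso F F' -> ginvf_iso F' F.
Proof.
move=> [eta [eta_nat eta_iso eta_adj]].
pose inv x := proj1_sig (iso_inv (eta_iso x)).
have invP x : comp (inv x) (eta x) = idm _ /\ comp (eta x) (inv x) = idm _.
  exact: (proj2_sig (iso_inv (eta_iso x))).
exists inv; split.
- move=> x y f; have [ix xi] := invP x; have [iy yi] := invP y.
  exact: (iso_square_inv HD ix xi iy yi (eta_nat x y f)).
- by move=> x; exists (eta x); case: (invP x).
- move=> a x; have [ix xi] := invP x; have [iy yi] := invP (act A a x).
  exact: (iso_square_inv HD ix xi iy yi (eta_adj a x)).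
Qed.

Lemma giso_trans (F F' F'' : ginvf A D) :
  ginvf_iso F F' -> ginvf_iso F' F'' -> ginvf_iso F F''.
Proof.
move=> [e1 [n1 i1 c1]] [e2 [n2 i2 c2]]; exists (fun x => comp (e2 x) (e1 x)); split.
- by move=> x y f; rewrite -compA // n1 compA // n2 -compA.
- by move=> x; apply: iso_comp.
- by move=> a x; rewrite -compA // c1 compA // c2 -compA.
Qed.

End GInvariantIsomorphisms.

Lemma giso_whisker (k : comPzRingType) (G : group) (C : precat k) (A : gaction G C)
  (D D' : precat k) (K : functor D D') (F F' : ginvf A D) :
  is_functor K -> ginvf_iso F F' -> ginvf_iso (whisker K F) (whisker K F').
Proof.
move=> HK [e [n i c]]; exists (fun x => fmap K (e x)); split.
- by move=> x y f; rewrite /= -!(fmapM HK) n.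
- by move=> x; apply: (fmap_iso HK).
- by move=> a x; rewrite /= -!(fmapM HK) c.
Qed.

Lemma giso_whisker_natiso (k : comPzRingType) (G : group) (C : precat k)
  (A : gaction G C) (D D' : precat k) (N N' : functor D D') (F : ginvf A D) :
  nat_isomorphic N N' -> ginvf_iso (whisker N F) (whisker N' F).
Proof.
move=> [e [n i]]; exists (fun x => e (fobj (gfun F) x)); split.
- by move=> x y f; apply: n.
- by move=> x; apply: i.
- by move=> a x; apply: n.
Qed.

Section Equivalences.
Variables (k : comPzRingType) (C D : precat k) (HC : is_cat C) (HD : is_cat D).

Definition faithful (H : functor C D) :=
  forall x y (f g : hom C x y), fmap H f = fmap H g -> f = g.

Definition full (H : functor C D) :=
  forall x y (h : hom D (fobj H x) (fobj H y)), exists f, fmap H f = h.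

Lemma equivalence_full_faithful_dense (H : functor C D) :
  is_equivalence H -> [/\ faithful H, full H & is_dense H].
Proof.
case=> HH [H' [HH' [[eta [eta_nat eta_iso]] [eps [eps_nat eps_iso]]]]].
have faithful_H' x y (f g : hom D x y) : fmap H' f = fmap H' g -> f = g.
  move=> e; apply: (iso_cancel_r HD (eps_iso x)).
  by rewrite -[comp f _](eps_nat x y f) -[comp g _](eps_nat x y g) /= e.
have faithful_H : faithful H.
  move=> x y f g e; apply: (iso_cancel_r HC (eta_iso x)).
  by rewrite -[comp f _](eta_nat x y f) -[comp g _](eta_nat x y g) /= e.
split => // [x y h|y]; last by exists (fobj H' y), (eps y); apply: eps_iso.
have [eta' [eta'K _]] := eta_iso x.
exists (comp (eta y) (comp (fmap H' h) eta')).
apply: faithful_H'; apply: (iso_cancel_l HC (eta_iso y)).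
have := eta_nat x y (comp (eta y) (comp (fmap H' h) eta')); rewrite /= => ->.
by rewrite -!compA // eta'K comp1r.
Qed.

Section QuasiInverse.
Variables (H : functor C D) (HH : is_functor H).
Hypotheses (H_faithful : faithful H) (H_full : full H) (H_dense : is_dense H).

Let preimage_ob (y : obj D) : obj C :=
  proj1_sig (constructive_indefinite_description (H_dense y)).

Let preimage_iso_ex (y : obj D) :
  exists i : hom D (fobj H (preimage_ob y)) y, is_iso i.
Proof. by rewrite /preimage_ob; case: constructive_indefinite_description. Qed.

Let counit (y : obj D) : hom D (fobj H (preimage_ob y)) y :=
  proj1_sig (constructive_indefinite_description (preimage_iso_ex y)).

Let counit_iso y : is_iso (counit y).
Proof. by rewrite /counit; case: constructive_indefinite_description. Qed.

Let counit_inv y := proj1_sig (iso_inv (counit_iso y)).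

Let counitK y : comp (counit_inv y) (counit y) = idm _.
Proof. by rewrite /counit_inv; case: iso_inv => g []. Qed.

Let counitKV y : comp (counit y) (counit_inv y) = idm _.
Proof. by rewrite /counit_inv; case: iso_inv => g []. Qed.

Let preimage (x1 x2 : obj C) (h : hom D (fobj H x1) (fobj H x2)) : hom C x1 x2 :=
  proj1_sig (constructive_indefinite_description (H_full h)).

Let preimageK x1 x2 (h : hom D (fobj H x1) (fobj H x2)) : fmap H (preimage h) = h.
Proof. by rewrite /preimage; case: constructive_indefinite_description. Qed.

Definition quasi_inverse : functor D C := @Functor k D C preimage_ob
  (fun y y' h => preimage (comp (counit_inv y') (comp h (counit y)))).

Let fmap_H_quasi_inverse y y' (h : hom D y y') :
  fmap H (fmap quasi_inverse h) = comp (counit_inv y') (comp h (counit y)).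
Proof. exact: preimageK. Qed.

Lemma quasi_inverse_functor : is_functor quasi_inverse.
Proof.
split.
- move=> x y z g f; apply: H_faithful; rewrite (fmapM HH) !fmap_H_quasi_inverse.
  by rewrite -!compA // [in RHS](compA HD (counit y)) counitKV comp1l.
- move=> x; apply: H_faithful.
  by rewrite (fmap1 HH) fmap_H_quasi_inverse comp1l // counitK.
- move=> x y r f g; apply: H_faithful.
  rewrite (fmapD HH) (fmapZ HH) !fmap_H_quasi_inverse.
  by rewrite compDl // compZl // compDr // compZr.
Qed.

Lemma quasi_inverse_unit : nat_isomorphic (fcomp H quasi_inverse) (fid C).
Proof.
exists (fun x => preimage (counit (fobj H x))); split.
  move=> x y f; apply: H_faithful; rewrite !(fmapM HH) fmap_H_quasi_inverse !preimageK.
  by rewrite !compA // counitKV comp1l.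
move=> x; exists (preimage (counit_inv (fobj H x))).
split; apply: H_faithful; rewrite (fmapM HH) (fmap1 HH) !preimageK.
  exact: counitK.
exact: counitKV.
Qed.

Lemma quasi_inverse_counit : nat_isomorphic (fcomp quasi_inverse H) (fid D).
Proof.
exists counit; split; last exact: counit_iso.
by move=> x y f; rewrite /= fmap_H_quasi_inverse !compA // counitKV comp1l.
Qed.

End QuasiInverse.

Lemma full_faithful_dense_equivalence (H : functor C D) : is_functor H ->
  faithful H -> full H -> is_dense H -> is_equivalence H.
Proof.
move=> HH H_faithful H_full H_dense; split => //.
exists (quasi_inverse H_full H_dense); split; first exact: quasi_inverse_functor.
by split; [exact: quasi_inverse_unit | exact: quasi_inverse_counit].
Qed.

End Equivalences.

Section CoveringCharacterisation.
Variables (k : comPzRingType) (G : group) (C : precat k) (A : gaction G C).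
Variables (C' : precat k) (F : ginvf A C').
Hypotheses (HC : is_cat C) (HA : is_gcat A) (HC' : is_cat C') (HF : is_ginv F).

Local Notation P := (orbitPphi A).

Definition orbit_factorisation (F0 : ginvf A C') :=
  exists H : functor (orbit_cat A) C', is_equivalence H /\ F0 = whisker H P.

Lemma covering_orbit_factorisation : is_covering F -> orbit_factorisation F.
Proof.
move=> [F_prec F_dense]; have HL := lift_functor HC HA HC' HF.
exists (lift F); split; last by rewrite lift_whisker.
apply: (full_faithful_dense_equivalence HC' HL) => // [x y f g e|x y h].
  rewrite -(F1P_coeffs HC HA f) -(F1P_coeffs HC HA g); congr (F1 P _).
  by apply: (proj1 (F_prec x y)) e; apply: fin_supp_coeffs.
have [g g_fin <-] := proj2 (F_prec x y) h.
by exists (F1 P g); rewrite /= /lift_map coeffs_F1P.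
Qed.

Lemma orbit_factorisation_covering : orbit_factorisation F -> is_covering F.
Proof.
move=> [H [H_equiv ->]]; have OC := orbit_cat_is_cat HC HA.
have [H_faithful H_full H_dense] := equivalence_full_faithful_dense OC HC' H_equiv.
have F1_H x y (g : forall a, hom C (act A a x) y) :
    fin_supp g -> F1 (whisker H P) g = fmap H (F1 P g).
  exact: (F1_whisker (F := P) OC (orbitP_functor HC HA) H_equiv.1).
split => // x y; split.
  move=> f g f_fin g_fin; rewrite !F1_H // => /H_faithful e.
  by rewrite -(coeffs_F1P HC HA f_fin) -(coeffs_F1P HC HA g_fin) e.
move=> h; have [f <-] := H_full x y h.
exists (coeffs f); first exact: fin_supp_coeffs.
by rewrite F1_H ?F1P_coeffs //; exact: fin_supp_coeffs.
Qed.

(* The lift of F is isomorphic to H, and a functor isomorphic to an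
   equivalence is an equivalence. *)
Lemma orbit_iso_factorisation :
  (exists H : functor (orbit_cat A) C',
     is_equivalence H /\ ginvf_iso F (whisker H P)) ->
  orbit_factorisation F.
Proof.
move=> [H [[HH [H' [HH' [unit counit]]]] iso]]; have OC := orbit_cat_is_cat HC HA.
have HL := lift_functor HC HA HC' HF; have LP := lift_whisker HC HA HC' HF.
have LH : nat_isomorphic (lift F) H.
  by apply: (orbit_whisker_natiso HC HA HC' HL HH); rewrite LP.
exists (lift F); split; last by rewrite LP.
split => //; exists H'; split => //; split.
  exact: (natiso_trans OC (natiso_fcompr HH' LH) unit).
exact: (natiso_trans HC' (natiso_fcompl H' LH) counit).
Qed.

Lemma orbit_factorisation_universal (Q : forall E : precat k, ginvf A E -> Prop) :
  orbit_factorisation F -> is_universal_among F Q.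
Proof.
move=> [H [[HH [H' [HH' [unit counit]]]] ->]] E Ec HE HEc _.
have OC := orbit_cat_is_cat HC HA.
have HL := lift_functor HC HA HE HEc; have LP := lift_whisker HC HA HE HEc.
split.
  exists (fcomp H' (lift Ec)); split; first exact: fcomp_functor.
  rewrite -{1}LP; exact: (giso_whisker_natiso P (natiso_trans HE
    (natiso_refl HE (lift Ec)) (natiso_fcompr HL (natiso_sym OC unit)))).
move=> K1 K2 HK1 HK2 iso1 iso2.
have := orbit_whisker_natiso HC HA HE (fcomp_functor HH HK1) (fcomp_functor HH HK2)
  (giso_trans HE (giso_sym HE iso1) iso2).
(* K1 ~ K1 H H' ~ K2 H H' ~ K2, the middle step by uniqueness out of C/G. *)
move=> HK12; apply: (natiso_trans HE (natiso_refl HE (fcomp (fid _) K1))).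
apply: (natiso_trans HE (natiso_fcompr HK1 (natiso_sym HC' counit))).
apply: (natiso_trans HE (natiso_fcompl H' HK12)).
exact: (natiso_trans HE (natiso_fcompr HK2 counit) (natiso_refl HE K2)).
Qed.

Lemma universal_orbit_factorisation (Q : forall E : precat k, ginvf A E -> Prop) :
  is_universal_among F Q -> Q (orbit_cat A) P -> Q C' F -> orbit_factorisation F.
Proof.
move=> F_univ QP QF; have OC := orbit_cat_is_cat HC HA.
have [[K [HK isoK]] _] := F_univ (orbit_cat A) P OC (orbitPphi_ginv HC HA) QP.
have [_ F_unique] := F_univ C' F HC' HF QF.
have HL := lift_functor HC HA HC' HF; have LP := lift_whisker HC HA HC' HF.
have unit : nat_isomorphic (fid (orbit_cat A)) (fcomp (lift F) K).
  rewrite -LP in isoK.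
  exact: (orbit_whisker_natiso HC HA OC (fid_functor _) (fcomp_functor HL HK) isoK).
have counit : nat_isomorphic (fcomp K (lift F)) (fid C').
  apply: (F_unique _ _ (fcomp_functor HK HL) (fid_functor C') _ (giso_refl HC' F)).
  by have := giso_whisker HL isoK; rewrite LP.
exists (lift F); split; last by rewrite LP.
split => //; exists K; split => //; split => //.
exact: (natiso_sym OC unit).
Qed.

End CoveringCharacterisation.

Theorem mainTheorem4 (k : comPzRingType) (G : group) (C : precat k)
  (A : gaction G C) (C' : precat k) (F : ginvf A C') :
  is_cat C -> is_gcat A -> is_cat C' -> is_ginv F ->
  let P1 := is_covering F in
  let P2 := is_precovering F /\
            is_universal_among F (fun E (Ec : ginvf A E) => is_precovering Ec) in
  let P3 := is_universal_among F (fun E (Ec : ginvf A E) => True) in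
  let P4 := exists H : functor (orbit_cat A) C',
              is_equivalence H /\ ginvf_iso F (whisker H (orbitPphi A)) in
  let P5 := exists H : functor (orbit_cat A) C',
              is_equivalence H /\ F = whisker H (orbitPphi A) in
  [/\ P1 <-> P2, P1 <-> P3, P1 <-> P4 & P1 <-> P5].
Proof.
move=> HC HA HC' HF; cbv zeta.
have to5 := covering_orbit_factorisation HC HA HC' HF.
have from5 := orbit_factorisation_covering HC HA HC'.
have univ Q := orbit_factorisation_universal HC HA HC' (Q := Q).
split; split.
- by move=> cov; split; [case: cov | exact/univ/to5].
- move=> [prec F_univ]; apply/from5.
  apply: (universal_orbit_factorisation HC HA HC' HF F_univ) => //.
  exact: orbitPphi_precovering.
- by move/to5/univ.
- by move=> F_univ; apply/from5/(universal_orbit_factorisation HC HA HC' HF F_univ).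
- by move/to5 => [H [H_equiv ->]]; exists H; split => //; apply: giso_refl.
- by move=> iso; apply/from5/(orbit_iso_factorisation HC HA HC' HF iso).
- exact: to5.
- exact: from5.
Qed.
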